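(* Let $\Sigma$ be a set, $1\le p<\infty$, and $d:\Sigma\times\Sigma\to\mathbb{R}$. Suppose $\alpha$ and $\beta$ are increasing functions $\Sigma^+\to\mathbb{R}$ such that $\alpha^p,\beta^p\in\Gamma(\Sigma)$, and let $D$ be the $\ell^p$ edit distance on $\Sigma^*$ extending $d$, $\alpha$ and $\beta$. Then $D$ is arbitrarily decomposable of order $p$.
   Context: $\Sigma^*$ is the free monoid on $\Sigma$ (finite words, concatenation, empty word $e$), $\Sigma^+=\Sigma^*\setminus\{e\}$. For $w=w_1\cdots w_n$ write $|w|=n$, $\bar w_k=w_1\cdots w_k$, $\bar w_0=e$. A word $u$ is a factor of $v$ if $v=xuy$ for some $x,y\in\Sigma^*$; $\mathfrak{F}(v)$ is the set of factors of $v$. A gap penalty over $\Sigma^+$ is a positive function $\gamma:\Sigma^+\to\mathbb{R}$ with $\gamma(u)+\gamma(v)\ge\gamma(uv)$ for all $u,v\in\Sigma^+$; $\Gamma(\Sigma)$ is the set of these. A function $\gamma$ is increasing if $\gamma(uxv)\ge\gamma(uv)$ for all $u,v,x\in\Sigma^*$. $\ell^p$ edit distance: for $x,y\in\Sigma^*$, $m=|x|$, $n=|y|$, define recursively $D(e,e)=0$, $D(e,\bar y_j)=\alpha(\bar y_j)$, $D(\bar x_i,e)=\beta(\bar x_i)$, and for $1\le i\le m$, $1\le j\le n$, \[D(\bar x_i,\bar y_j)=\Big(\min\Big\{D^p(\bar x_{i-1},\bar y_{j-1})+d^p(x_i,y_j),\ \min_{1\le k\le j}\{D^p(\bar x_i,\bar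 y_{j-k})+\alpha^p(y_{j-k+1}\cdots y_j)\},\ \min_{1\le k\le i}\{D^p(\bar x_{i-k},\bar y_j)+\beta^p(x_{i-k+1}\cdots x_i)\}\Big\}\Big)^{1/p},\] with $D(x,y)=D(\bar x_m,\bar y_n)$. A function $\rho:\Sigma^*\times\Sigma^*\to\mathbb{R}$ is arbitrarily decomposable of order $p$ if for all $x,y\in\Sigma^*$: (i) for every $y'\in\mathfrak{F}(y)$ there exist $x',x_1^*,x_2^*\in\mathfrak{F}(x)$ with $x=x_1^*x'x_2^*$ and $y_1^*,y_2^*,u,v\in\mathfrak{F}(y)$ with $y=y_1^*uy'vy_2^*$ and $\rho(x,y)\ge(\rho^p(x_1^*,y_1^* )+\rho^p(x',y')+\rho^p(x_2^*,y_2^* ))^{1/p}$; and (ii) for every $x'\in\mathfrak{F}(x)$ there exist $y',y_1^*,y_2^*\in\mathfrak{F}(y)$ with $y=y_1^*y'y_2^*$ and $x_1^*,x_2^*,u,v\in\mathfrak{F}(x)$ with $x=x_1^*ux'vx_2^*$ and $\rho(x,y)\ge(\rho^p(x_1^*,y_1^* )+\rho^p(x',y')+\rho^p(x_2^*,y_2^* ))^{1/p}$. *)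

From HB Require Import structures.
From mathcomp Require Import all_boot all_order all_algebra.
From mathcomp Require Import all_classical all_reals all_analysis.
Set Implicit Arguments. Unset Strict Implicit. Unset Printing Implicit Defensive.
Import Order.TTheory GRing.Theory Num.Theory.
Local Open Scope ring_scope.

Section EditDistance.
Context {R : realType} {Sigma : Type}.

(* Real power x^r.  For x >= 0 this is the usual x^r (powR);
   for x < 0 we use the odd (sign-preserving) extension -( (-x)^r ),
   so that for r = 1 it is the identity on all of R. *)
Definition ppow (r x : R) : R :=
  if 0 <= x then powR x r else - powR (- x) r.

Definition factor (u v : seq Sigma) : Prop := exists a b, v = a ++ u ++ b.

(* gap penalty over Sigma^+ (values at the empty word are irrelevant) *)
Definition is_gap_penalty (g : seq Sigma -> R) : Prop :=
  (forall u, u <> [::] -> 0 < g u) /\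
  (forall u v, u <> [::] -> v <> [::] -> g (u ++ v) <= g u + g v).

Definition increasing_gap (g : seq Sigma -> R) : Prop :=
  forall u v x, u ++ v <> [::] -> g (u ++ v) <= g (u ++ x ++ v).

(* The l^p edit distance, via its recursion on prefixes.
   For x = x_1..x_m, y = y_1..y_n (both nonempty):
   D(x,y) = ( min { D^p(x_1..x_{m-1}, y_1..y_{n-1}) + d^p(x_m,y_n),
                    min_{1<=k<=n} D^p(x, y_1..y_{n-k}) + alpha^p(y_{n-k+1}..y_n),
                    min_{1<=k<=m} D^p(x_1..x_{m-k}, y) + beta^p(x_{m-k+1}..x_m) } )^(1/p).
   [fuel] only ensures termination; it is always sufficient below. *)
Fixpoint lp_edit_aux (p : R) (d : Sigma -> Sigma -> R) (alpha beta : seq Sigma -> R)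
    (fuel : nat) (x y : seq Sigma) : R :=
  match fuel with
  | 0%N => 0
  | S f =>
    match x, y with
    | [::], [::] => 0
    | [::], _ => alpha y
    | _, [::] => beta x
    | a :: x', b :: y' =>
      let m := size x in let n := size y in
      let Dp u v := ppow p (lp_edit_aux p d alpha beta f u v) in
      let c1 := Dp (take m.-1 x) (take n.-1 y) + ppow p (d (last a x') (last b y')) in
      let c2 := [seq Dp x (take (n - k) y) + ppow p (alpha (drop (n - k) y))
                | k <- iota 1 n] in
      let c3 := [seq Dp (take (m - k) x) y + ppow p (beta (drop (m - k) x))
                | k <- iota 1 m] in
      ppow (1 / p) (foldr Num.min c1 (c2 ++ c3))
    end
  end.

Definition lp_edit (p : R) (d : Sigma -> Sigma -> R) (alpha beta : seq Sigma -> R)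
    (x y : seq Sigma) : R :=
  lp_edit_aux p d alpha beta (size x + size y).+1 x y.

Definition arb_decomposable (p : R) (rho : seq Sigma -> seq Sigma -> R) : Prop :=
  forall x y : seq Sigma,
    (forall y', factor y' y ->
       exists x' x1 x2 y1 y2 u v,
         [/\ factor x' x, factor x1 x, factor x2 x & x = x1 ++ x' ++ x2] /\
         [/\ factor y1 y, factor y2 y, factor u y, factor v y &
             y = y1 ++ u ++ y' ++ v ++ y2] /\
         ppow (1 / p) (ppow p (rho x1 y1) + ppow p (rho x' y') + ppow p (rho x2 y2))
           <= rho x y) /\
    (forall x', factor x' x ->
       exists y' y1 y2 x1 x2 u v,
         [/\ factor y' y, factor y1 y, factor y2 y & y = y1 ++ y' ++ y2] /\
         [/\ factor x1 x, factor x2 x, factor u x, factor v x &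
             x = x1 ++ u ++ x' ++ v ++ x2] /\
         ppow (1 / p) (ppow p (rho x1 y1) + ppow p (rho x' y') + ppow p (rho x2 y2))
           <= rho x y).

End EditDistance.

From Pilot Require Import Defs.
From HB Require Import structures.
From mathcomp Require Import all_boot all_order all_algebra.
From mathcomp Require Import all_classical all_reals all_analysis.
From mathcomp Require Import lra zify.
Import Order.TTheory GRing.Theory Num.Theory.
Local Open Scope ring_scope.

Set Implicit Arguments. Unset Strict Implicit. Unset Printing Implicit Defensive.

(* Write E = D^p.  On nonempty words E is the minimum of the three candidates of its
   recursion, so every candidate bounds E from above and some candidate attains it.
   From these facts alone, by induction on |x| + |y|: for every cut y = ya yb there is a
   cut x = xa xb with E(xa, ya') + E(xb, yb) <= E(x, y) for some prefix ya' of ya, and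
   symmetrically one keeping ya whole and shortening yb to a suffix.  When the gap ending
   an optimal alignment straddles the cut, it is charged to the side kept whole; this is
   where monotonicity of the gap penalties enters, while subadditivity extends the
   candidate bounds to the empty word.  Cutting y = y1 y' y2 twice decomposes along y',
   and exchanging the roles of x and y (and of alpha and beta) decomposes along a factor
   of x. *)

Section SignedPower.
Variable R : realType.

Lemma ppowK (r s : R) : r * s = 1 -> cancel (ppow r) (ppow s).
Proof.
move=> rs z; rewrite /ppow; case: (leP 0 z) => [z0|z_lt0].
  by rewrite powR_ge0 -powRrM rs powRr1.
rewrite lt_geF ?oppr_lt0 ?powR_gt0 ?oppr_gt0 //.
by rewrite opprK -powRrM rs powRr1 ?opprK // oppr_ge0 ltW.
Qed.

Lemma ppow0 (r : R) : r != 0 -> ppow r 0 = 0.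
Proof. by move=> r_neq0; rewrite /ppow lexx powR0. Qed.

Lemma ler_ppow (r x y : R) : 0 <= r -> x <= y -> ppow r x <= ppow r y.
Proof.
move=> r0 xy; rewrite /ppow; case: (leP 0 x) => [x0|x_lt0]; case: (leP 0 y) => [y0|y_lt0].
- exact: ge0_ler_powR.
- by have := lt_le_trans y_lt0 (le_trans x0 xy); rewrite ltxx.
- by rewrite (@le_trans _ _ 0) ?oppr_le0 ?powR_ge0.
- by rewrite lerN2 ge0_ler_powR ?nnegrE ?oppr_ge0 ?lerN2 // ltW.
Qed.

Lemma ppow_invr_le (p z w : R) : 0 < p -> z <= ppow p w -> ppow (1 / p) z <= w.
Proof.
move=> p_gt0 zw; rewrite -[w in _ <= w](@ppowK p (1 / p)); last first.
  by rewrite mul1r mulfV ?gt_eqF.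
by rewrite ler_ppow // divr_ge0 // ltW.
Qed.

End SignedPower.

Section Words.
Variable T : Type.
Implicit Types s u v w : seq T.

Lemma nil_or_not_nil s : s = [::] \/ s <> [::].
Proof. by case: s; [left | right]. Qed.

Lemma catr_neq_nil u v : v <> [::] -> u ++ v <> [::].
Proof. by case: u => // _ ->. Qed.

Lemma size_gt0_neq_nil s : s <> [::] -> (0 < size s)%N.
Proof. by case: s. Qed.

Lemma drop_neq_nil n s : (n < size s)%N -> drop n s <> [::].
Proof. by move=> n_lt e; move: (size_drop n s); rewrite e /=; lia. Qed.

Lemma take_size_belast (a : T) s : take (size s) (a :: s) = belast a s.
Proof. by rewrite lastI -cats1 take_size_cat // size_belast. Qed.

Lemma rcons_eq_cons s (a h : T) tl : rcons s a = h :: tl -> belast h tl = s /\ last h tl = a.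
Proof. by rewrite lastI => /rcons_inj[-> ->]. Qed.

Lemma cat_eq_catP (a b c e : seq T) : a ++ b = c ++ e ->
  (exists m, b = m ++ e /\ c = a ++ m) \/
  (exists w, [/\ w <> [::], a = c ++ w & e = w ++ b]).
Proof.
elim: a c => [|h a IH] [|h' c] //=.
- by move=> ->; left; exists [::].
- by move=> ->; left; exists (h' :: c).
- by move=> <-; right; exists (h :: a).
case=> <- /IH [[m [-> ->]]|[w [w_neq -> ->]]].
- by left; exists m.
- by right; exists w.
Qed.

Lemma factor_cat3 u v w : let s := u ++ v ++ w in
  [/\ Defs.factor v s, Defs.factor u s & Defs.factor w s].
Proof.
split; first by exists u, w.
- by exists [::], (v ++ w).
- by exists (u ++ v), [::]; rewrite cats0 catA.
Qed.

Lemma factor_cat5 (a b c e f : seq T) : let s := a ++ b ++ c ++ e ++ f in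
  [/\ Defs.factor a s, Defs.factor f s, Defs.factor b s & Defs.factor e s].
Proof.
split; first by exists [::], (b ++ c ++ e ++ f).
- by exists (a ++ b ++ c ++ e), [::]; rewrite cats0 !catA.
- by exists a, (c ++ e ++ f).
- by exists (a ++ b ++ c), f; rewrite !catA.
Qed.

Variable R : realType.

Lemma increasing_gap_catl (g : seq T -> R) w u :
  increasing_gap g -> u <> [::] -> g u <= g (w ++ u).
Proof. by move=> g_incr u_neq; apply: (g_incr [::]). Qed.

Lemma increasing_gap_catr (g : seq T -> R) u w :
  increasing_gap g -> u <> [::] -> g u <= g (u ++ w).
Proof.
by move=> g_incr u_neq; have := g_incr u [::] w; rewrite !cats0; apply.
Qed.

Lemma increasing_gap_ppow (g : seq T -> R) r :
  0 <= r -> increasing_gap g -> increasing_gap (fun u => ppow r (g u)).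
Proof. by move=> r_ge0 g_incr u v w uv; apply: ler_ppow r_ge0 (g_incr u v w uv). Qed.

End Words.

Section EditRecursion.
Variables (R : realType) (Sigma : Type).
Implicit Types (x y : seq Sigma) (A B : seq Sigma -> R).

(* [E], [A], [B], [c] stand for D^p, alpha^p, beta^p and d^p. *)
Record edit_recursion (E : seq Sigma -> seq Sigma -> R) A B
    (c : Sigma -> Sigma -> R) : Prop := EditRecursion {
  edit_nil : E [::] [::] = 0;
  edit_nill y : y <> [::] -> E [::] y = A y;
  edit_nilr x : x <> [::] -> E x [::] = B x;
  edit_attained x y : x <> [::] -> y <> [::] ->
    (exists x0 y0 a b, [/\ x = rcons x0 a, y = rcons y0 b & E x0 y0 + c a b <= E x y])
    \/ (exists y0 t, [/\ t <> [::], y = y0 ++ t & E x y0 + A t <= E x y])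
    \/ (exists x0 s, [/\ s <> [::], x = x0 ++ s & E x0 y + B s <= E x y]);
  edit_rcons_le x y a b : E (rcons x a) (rcons y b) <= E x y + c a b;
  edit_catr_le_nonnil x y t : x <> [::] -> t <> [::] -> E x (y ++ t) <= E x y + A t;
  edit_catl_le_nonnil x y s : y <> [::] -> s <> [::] -> E (x ++ s) y <= E x y + B s;
  edit_gapl_incr : increasing_gap A;
  edit_gapr_incr : increasing_gap B;
  edit_gapl : is_gap_penalty A;
  edit_gapr : is_gap_penalty B }.

Lemma edit_recursion_flip E A B c : edit_recursion E A B c ->
  edit_recursion (fun x y => E y x) B A (fun a b => c b a).
Proof.
case=> nil nill nilr attained rcons_le catr_le catl_le incrA incrB gA gB.
split=> // [x y x_neq y_neq | x y t x_neq t_neq | x y s y_neq s_neq]; last 2 first.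
- exact: catl_le.
- exact: catr_le.
case: (attained y x y_neq x_neq) => [[y0 [x0 [b [a []]]]] | [[x0 [s []]] | [y0 [t []]]]].
- by left; exists x0, y0, a, b.
- by right; right; exists x0, s.
- by right; left; exists y0, t.
Qed.

Section Splitting.
Variables (E : seq Sigma -> seq Sigma -> R) (A B : seq Sigma -> R) (c : Sigma -> Sigma -> R).
Hypothesis er : edit_recursion E A B c.

Lemma edit_catr_le x y t : t <> [::] -> E x (y ++ t) <= E x y + A t.
Proof.
move=> t_neq; case: x => [|a x]; last exact: (edit_catr_le_nonnil er).
case: y => [|b y]; first by rewrite (edit_nil er) add0r (edit_nill er).
by rewrite !(edit_nill er) //; apply: (edit_gapl er).2.
Qed.

Lemma edit_catl_le x y s : s <> [::] -> E (x ++ s) y <= E x y + B s.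
Proof.
move=> s_neq; case: y => [|b y]; last exact: (edit_catl_le_nonnil er).
case: x => [|a x]; first by rewrite (edit_nil er) add0r (edit_nilr er).
by rewrite !(edit_nilr er) //; apply: (edit_gapr er).2.
Qed.

Lemma edit_split_shave_left x ya yb : exists xa xb ya' u,
  [/\ x = xa ++ xb, ya = ya' ++ u & E xa ya' + E xb yb <= E x (ya ++ yb)].
Proof.
have [n size_lt] := ubnP (size x + size (ya ++ yb)).
elim: n => // n IHn in x ya yb size_lt *.
have [->|yb_neq] := nil_or_not_nil yb.
  by exists x, [::], ya, [::]; rewrite !cats0 (edit_nil er) addr0.
have [->|ya_neq] := nil_or_not_nil ya.
  by exists [::], x, [::], [::]; rewrite (edit_nil er) add0r.
have [->|x_neq] := nil_or_not_nil x.
  exists [::], [::], [::], ya; rewrite (edit_nil er) add0r !(edit_nill er) //;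
    last exact: catr_neq_nil yb_neq.
  by split=> //; exact: increasing_gap_catl (edit_gapl_incr er) yb_neq.
case: (edit_attained er x_neq (catr_neq_nil (u := ya) yb_neq)) =>
  [[x0 [y0 [a [b [ex ey le]]]]] | [[y0 [t [t_neq ey le]]] | [x0 [s [s_neq ex le]]]]].
- case/lastP: yb => [//|yb0 b'] in yb_neq size_lt ey le *.
  move: ey le; rewrite -rcons_cat => /rcons_inj[<- <-] le.
  have [|xa [xb [ya' [u [ex0 eya le_IH]]]]] := IHn x0 ya yb0.
    by move: size_lt; rewrite ex !size_cat !size_rcons; lia.
  exists xa, (rcons xb a), ya', u; split=> //; first by rewrite ex ex0 rcons_cat.
  by have := edit_rcons_le er xb yb0 a b'; lra.
- case/cat_eq_catP: ey => [[m [eyb ey0]] | [w [w_neq eya et]]].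
  + have [|xa [xb [ya' [u [ex eya le_IH]]]]] := IHn x ya m.
      by move: size_lt (size_gt0_neq_nil t_neq); rewrite !size_cat eyb size_cat; lia.
    exists xa, xb, ya', u; split=> //.
    by rewrite -ey0 in le_IH; have := edit_catr_le xb m t_neq; rewrite -eyb; lra.
  + exists x, [::], y0, w; rewrite cats0 (edit_nill er) //; split=> //.
    by have := increasing_gap_catl w (edit_gapl_incr er) yb_neq; rewrite -et; lra.
- have [|xa [xb [ya' [u [ex0 eya le_IH]]]]] := IHn x0 ya yb.
    by move: size_lt (size_gt0_neq_nil s_neq); rewrite ex !size_cat; lia.
  exists xa, (xb ++ s), ya', u; split=> //; first by rewrite ex ex0 catA.
  by have := edit_catl_le xb yb s_neq; lra.
Qed.

Lemma edit_split_shave_right x ya yb : exists xa xb v yb',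
  [/\ x = xa ++ xb, yb = v ++ yb' & E xa ya + E xb yb' <= E x (ya ++ yb)].
Proof.
have [n size_lt] := ubnP (size x + size (ya ++ yb)).
elim: n => // n IHn in x ya yb size_lt *.
have [->|yb_neq] := nil_or_not_nil yb.
  by exists x, [::], [::], [::]; rewrite !cats0 (edit_nil er) addr0.
have [->|ya_neq] := nil_or_not_nil ya.
  by exists [::], x, [::], yb; rewrite (edit_nil er) add0r.
have [->|x_neq] := nil_or_not_nil x.
  exists [::], [::], yb, [::]; rewrite !cats0 (edit_nil er) addr0 !(edit_nill er) //;
    last exact: catr_neq_nil yb_neq.
  by split=> //; exact: increasing_gap_catr (edit_gapl_incr er) ya_neq.
case: (edit_attained er x_neq (catr_neq_nil (u := ya) yb_neq)) =>
  [[x0 [y0 [a [b [ex ey le]]]]] | [[y0 [t [t_neq ey le]]] | [x0 [s [s_neq ex le]]]]].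
- case/lastP: yb => [//|yb0 b'] in yb_neq size_lt ey le *.
  move: ey le; rewrite -rcons_cat => /rcons_inj[<- <-] le.
  have [|xa [xb [v [yb' [ex0 eyb0 le_IH]]]]] := IHn x0 ya yb0.
    by move: size_lt; rewrite ex !size_cat !size_rcons; lia.
  exists xa, (rcons xb a), v, (rcons yb' b'); split.
  + by rewrite ex ex0 rcons_cat.
  + by rewrite eyb0 rcons_cat.
  + by have := edit_rcons_le er xb yb' a b'; lra.
- case/cat_eq_catP: ey => [[m [eyb ey0]] | [w [w_neq eya et]]].
  + have [|xa [xb [v [yb' [ex em le_IH]]]]] := IHn x ya m.
      by move: size_lt (size_gt0_neq_nil t_neq); rewrite !size_cat eyb size_cat; lia.
    exists xa, xb, v, (yb' ++ t); split=> //; first by rewrite eyb em catA.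
    by rewrite -ey0 in le_IH; have := edit_catr_le xb yb' t_neq; lra.
  + exists x, [::], yb, [::]; rewrite !cats0 (edit_nil er) addr0; split=> //.
    have := increasing_gap_catr yb (edit_gapl_incr er) w_neq.
    by have := edit_catr_le x y0 w_neq; rewrite -eya -et; lra.
- have [|xa [xb [v [yb' [ex0 eyb le_IH]]]]] := IHn x0 ya yb.
    by move: size_lt (size_gt0_neq_nil s_neq); rewrite ex !size_cat; lia.
  exists xa, (xb ++ s), v, yb'; split=> //; first by rewrite ex ex0 catA.
  by have := edit_catl_le xb yb' s_neq; lra.
Qed.

Lemma edit_split3 x y1 y' y2 : exists x1 x' x2 y1' u v y2',
  [/\ x = x1 ++ x' ++ x2, y1 = y1' ++ u, y2 = v ++ y2'
    & E x1 y1' + E x' y' + E x2 y2' <= E x (y1 ++ y' ++ y2)].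
Proof.
have [x1 [xb [y1' [u [ex ey1 le1]]]]] := edit_split_shave_left x y1 (y' ++ y2).
have [x' [x2 [v [y2' [exb ey2 le2]]]]] := edit_split_shave_right xb y' y2.
exists x1, x', x2, y1', u, v, y2'; split=> //; first by rewrite ex exb.
lra.
Qed.

End Splitting.
End EditRecursion.

Section FoldMin.
Variable R : realDomainType.
Implicit Types (c z : R) (l : seq R).

Lemma foldr_min_le_init c l : foldr Num.min c l <= c.
Proof. by elim: l => //= h l IH; rewrite ge_min IH orbT. Qed.

Lemma foldr_min_le c l z : z \in l -> foldr Num.min c l <= z.
Proof.
elim: l => //= h l IH; rewrite inE ge_min => /orP[/eqP->|/IH->]; rewrite ?lexx ?orbT //.
Qed.

Lemma foldr_min_mem c l : foldr Num.min c l \in c :: l.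
Proof.
elim: l => [|h l IH] /=; first by rewrite inE.
rewrite minEle; case: ifP => _; first by rewrite !inE eqxx orbT.
by move: IH; rewrite !inE => /orP[->|->]; rewrite ?orbT.
Qed.

End FoldMin.

Section LpEditRecursion.
Variables (R : realType) (Sigma : Type) (p : R) (d : Sigma -> Sigma -> R).
Variables alpha beta : seq Sigma -> R.
Implicit Types (x y : seq Sigma) (F : seq Sigma -> seq Sigma -> R).

Local Notation aux := (lp_edit_aux p d alpha beta).
Local Notation D := (lp_edit p d alpha beta).

Definition lp_edit_step F a x' b y' : R :=
  let x := a :: x' in let y := b :: y' in let m := size x in let n := size y in
  foldr Num.min (F (take m.-1 x) (take n.-1 y) + ppow p (d (last a x') (last b y')))
   ([seq F x (take (n - k) y) + ppow p (alpha (drop (n - k) y)) | k <- iota 1 n] ++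
    [seq F (take (m - k) x) y + ppow p (beta (drop (m - k) x)) | k <- iota 1 m]).

Lemma lp_edit_auxS f a x' b y' : aux f.+1 (a :: x') (b :: y') =
  ppow (1 / p) (lp_edit_step (fun u v => ppow p (aux f u v)) a x' b y').
Proof. by []. Qed.

Lemma eq_lp_edit_step F G a x' b y' :
    (forall u v, (size u + size v < (size x').+1 + (size y').+1)%N -> F u v = G u v) ->
  lp_edit_step F a x' b y' = lp_edit_step G a x' b y'.
Proof.
move=> FG; rewrite /lp_edit_step; cbv zeta.
congr (foldr _ (_ + _) (_ ++ _)).
- by rewrite /= !take_size_belast; apply: FG; rewrite !size_belast; lia.
- apply/eq_in_map => k; rewrite mem_iota => /andP[k_gt0 k_le]; congr (_ + _).
  by apply: FG; rewrite size_take_min /=; lia.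
- apply/eq_in_map => k; rewrite mem_iota => /andP[k_gt0 k_le]; congr (_ + _).
  by apply: FG; rewrite size_take_min /=; lia.
Qed.

Lemma lp_edit_aux_fuel f g x y : (size x + size y < f)%N -> (size x + size y < g)%N ->
  aux f x y = aux g x y.
Proof.
elim: f g x y => [//|f IH] [//|g] [|a x] [|b y] f_gt g_gt; [by [] | by [] | by [] |].
rewrite !lp_edit_auxS; congr ppow; apply: eq_lp_edit_step => u v size_lt.
by rewrite (IH g) //; move: f_gt g_gt => /=; lia.
Qed.

Lemma lp_edit_auxE f x y : (size x + size y < f)%N -> aux f x y = D x y.
Proof. by move=> f_gt; apply: lp_edit_aux_fuel. Qed.

Hypothesis p_gt0 : 0 < p.

Definition lp_edit_pow x y := ppow p (D x y).

Lemma lp_edit_pow_cons a x' b y' :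
  lp_edit_pow (a :: x') (b :: y') = lp_edit_step lp_edit_pow a x' b y'.
Proof.
rewrite /lp_edit_pow {1}/lp_edit lp_edit_auxS ppowK; last by rewrite mul1r mulVf ?gt_eqF.
by apply: eq_lp_edit_step => u v size_lt; rewrite lp_edit_auxE.
Qed.

Lemma lp_edit_pow_attained x y : x <> [::] -> y <> [::] ->
  (exists x0 y0 a b, [/\ x = rcons x0 a, y = rcons y0 b
                       & lp_edit_pow x0 y0 + ppow p (d a b) <= lp_edit_pow x y])
  \/ (exists y0 t, [/\ t <> [::], y = y0 ++ t
                     & lp_edit_pow x y0 + ppow p (alpha t) <= lp_edit_pow x y])
  \/ (exists x0 s, [/\ s <> [::], x = x0 ++ s
                     & lp_edit_pow x0 y + ppow p (beta s) <= lp_edit_pow x y]).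
Proof.
case: x => [//|a x'] _; case: y => [//|b y'] _.
rewrite lp_edit_pow_cons /lp_edit_step; cbv zeta.
set c1 := (X in foldr _ X _); set l := (X in foldr _ _ X).
have := foldr_min_mem c1 l; rewrite inE mem_cat.
case/orP=> [/eqP-> | /orP[/mapP[k k_in ->] | /mapP[k k_in ->]]].
- left; exists (belast a x'), (belast b y'), (last a x'), (last b y').
  by rewrite -!lastI /c1 !take_size_belast.
- right; left; exists (take (size (b :: y') - k) (b :: y')), (drop (size (b :: y') - k) (b :: y')).
  rewrite cat_take_drop; split=> //; apply: drop_neq_nil.
  by move: k_in; rewrite mem_iota /=; lia.
- right; right; exists (take (size (a :: x') - k) (a :: x')), (drop (size (a :: x') - k) (a :: x')).
  rewrite cat_take_drop; split=> //; apply: drop_neq_nil.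
  by move: k_in; rewrite mem_iota /=; lia.
Qed.

Lemma lp_edit_pow_rcons_le x y a b :
  lp_edit_pow (rcons x a) (rcons y b) <= lp_edit_pow x y + ppow p (d a b).
Proof.
case ex: (rcons x a) => [|a' x']; first by case: x ex.
case ey: (rcons y b) => [|b' y']; first by case: y ey.
have [<- <-] := rcons_eq_cons ex; have [<- <-] := rcons_eq_cons ey.
rewrite lp_edit_pow_cons; apply: le_trans (foldr_min_le_init _ _) _.
by rewrite !take_size_belast.
Qed.

Lemma lp_edit_pow_catr_le x y t : x <> [::] -> t <> [::] ->
  lp_edit_pow x (y ++ t) <= lp_edit_pow x y + ppow p (alpha t).
Proof.
case: x => [//|a x'] _ t_neq.
case eyt: (y ++ t) => [|b y']; first by have := catr_neq_nil (u := y) t_neq.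
rewrite lp_edit_pow_cons; apply: foldr_min_le; rewrite mem_cat; apply/orP; left.
apply/mapP; exists (size t).
  by rewrite mem_iota -eyt size_cat; move: (size_gt0_neq_nil t_neq); lia.
by rewrite -eyt size_cat addnK take_size_cat // drop_size_cat.
Qed.

Lemma lp_edit_pow_catl_le x y s : y <> [::] -> s <> [::] ->
  lp_edit_pow (x ++ s) y <= lp_edit_pow x y + ppow p (beta s).
Proof.
case: y => [//|b y'] _ s_neq.
case exs: (x ++ s) => [|a x']; first by have := catr_neq_nil (u := x) s_neq.
rewrite lp_edit_pow_cons; apply: foldr_min_le; rewrite mem_cat; apply/orP; right.
apply/mapP; exists (size s).
  by rewrite mem_iota -exs size_cat; move: (size_gt0_neq_nil s_neq); lia.
by rewrite -exs size_cat addnK take_size_cat // drop_size_cat.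
Qed.

Lemma lp_edit_recursion :
  increasing_gap alpha -> increasing_gap beta ->
  is_gap_penalty (fun u => ppow p (alpha u)) -> is_gap_penalty (fun u => ppow p (beta u)) ->
  edit_recursion lp_edit_pow (fun u => ppow p (alpha u)) (fun u => ppow p (beta u))
    (fun a b => ppow p (d a b)).
Proof.
move=> alpha_incr beta_incr alpha_gap beta_gap; split=> //.
- by rewrite /lp_edit_pow ppow0 ?gt_eqF.
- by case.
- by case.
- exact: lp_edit_pow_attained.
- exact: lp_edit_pow_rcons_le.
- exact: lp_edit_pow_catr_le.
- exact: lp_edit_pow_catl_le.
- exact: increasing_gap_ppow (ltW p_gt0) alpha_incr.
- exact: increasing_gap_ppow (ltW p_gt0) beta_incr.
Qed.

End LpEditRecursion.

Theorem lemma3p17 (R : realType) (Sigma : Type) (p : R)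
  (d : Sigma -> Sigma -> R) (alpha beta : seq Sigma -> R) :
  1 <= p ->
  increasing_gap alpha -> increasing_gap beta ->
  is_gap_penalty (fun u => ppow p (alpha u)) ->
  is_gap_penalty (fun u => ppow p (beta u)) ->
  arb_decomposable p (lp_edit p d alpha beta).
Proof.
move=> p_ge1 alpha_incr beta_incr alpha_gap beta_gap.
have p_gt0 : 0 < p by apply: lt_le_trans p_ge1.
have er := lp_edit_recursion d p_gt0 alpha_incr beta_incr alpha_gap beta_gap.
move=> x y; split.
- move=> y' [y1 [y2 ey]].
  have [x1 [x' [x2 [y1' [u [v [y2' [ex ey1 ey2 le]]]]]]]] := edit_split3 er x y1 y' y2.
  subst x y y1 y2; rewrite -!catA in le *.
  exists x', x1, x2, y1', y2', u, v.
  have [? ? ?] := factor_cat3 x1 x' x2; have [? ? ? ?] := factor_cat5 y1' u y' v y2'.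
  by split; [by split | split; [by split | exact: ppow_invr_le le]].
- move=> x' [x1 [x2 ex]].
  have [y1 [y' [y2 [x1' [u [v [x2' [ey ex1 ex2 le]]]]]]]] :=
    edit_split3 (edit_recursion_flip er) y x1 x' x2.
  subst x y x1 x2; rewrite -!catA in le *.
  exists y', y1, y2, x1', x2', u, v.
  have [? ? ?] := factor_cat3 y1 y' y2; have [? ? ? ?] := factor_cat5 x1' u x' v x2'.
  by split; [by split | split; [by split | exact: ppow_invr_le le]].
Qed.
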